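(* Let $\mathbb{A}$ be a Boolean algebra with the Grothendieck property and $(\mathbb{B},\mu)$ a metric Boolean algebra. If a sequence $(\varphi_n)$ in $\mathcal{H}(\mathbb{A},\mathbb{B})$ converges pointwise metric to $\varphi\in\mathcal{H}(\mathbb{A},\mathbb{B})$, then $(\varphi_n)$ converges pointwise Borel metric to $\varphi$.
   Context: $\mathbb{A}$ has the Grothendieck property if every weak* convergent sequence of (signed) Radon measures on the Stone space $St(\mathbb{A})$ is weakly convergent (weak* with respect to $C(St(\mathbb{A}))$, weak in $C(St(\mathbb{A}))^*$). A metric Boolean algebra $(\mathbb{B},\mu)$ is a Boolean algebra with a strictly positive finitely additive probability measure $\mu$; $d_\mu(A,B)=\mu(A\triangle B)$. $\mathcal{H}(\mathbb{A},\mathbb{B})$ is the set of homomorphisms $\mathbb{A}\to\mathbb{B}$. Algebras are identified with the clopen algebras of their Stone spaces; $\widehat{\mu}$ is the Radon extension of $\mu$ to $St(\mathbb{B})$; $f_\varphi\colon St(\mathbb{B})\to St(\mathbb{A})$, $f_\varphi(x)=\varphi^{-1}[x]$. Pointwise metric convergence: $d_\mu(\varphi_n(A),\varphi(A))\to0$ for each $A\in\mathbb{A}$. Pointwise Borel metric convergence: $\widehat{\mu}(f_{\varphi_n}^{-1}[B]\triangle f_\varphi^{-1}[B])\to0$ for every Borel $B\subseteq St(\mathbb{A})$. *)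

From HB Require Import structures.
From mathcomp Require Import all_boot all_order all_algebra.
From mathcomp Require Import all_classical all_reals all_analysis.
Set Implicit Arguments. Unset Strict Implicit. Unset Printing Implicit Defensive.
Import Order.LTheory GRing.Theory Num.Theory.
Import numFieldNormedType.Exports.
Local Open Scope classical_set_scope.
Local Open Scope ring_scope.

(** * Boolean algebras
   A Boolean algebra is a complemented distributive lattice with top and
   bottom, i.e. a [ctbDistrLatticeType d] of MathComp's order library. *)

Section BooleanAlgebra.
Context {d : Order.disp_t} (A : ctbDistrLatticeType d).

Definition ultrafilter (u : set A) : Prop :=
  [/\ u Order.top, ~ u Order.bottom,
      (forall a b : A, u a -> (a <= b)%O -> u b),
      (forall a b : A, u a -> u b -> u (Order.meet a b)) &
      (forall a : A, u a \/ u (Order.compl a))].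

Record stone := Stone { uf :> set A ; ufP : ultrafilter uf }.

HB.instance Definition _ := gen_eqMixin stone.
HB.instance Definition _ := gen_choiceMixin stone.

Definition sclopen (a : A) : set stone := [set x | uf x a].

Definition stone_base (i : option A) : set stone :=
  if i is Some a then sclopen a else set0.

Lemma stone_base_cover :
  \bigcup_(i in range (@Some A)) stone_base i = setT.
Proof.
apply/seteqP; split => // x _; exists (Some Order.top); first by exists Order.top.
by case: (ufP x).
Qed.

Lemma stone_base_join (i j : option A) (t : stone) :
  range (@Some A) i -> range (@Some A) j -> stone_base i t -> stone_base j t ->
  exists k, [/\ range (@Some A) k, stone_base k t &
                stone_base k `<=` stone_base i `&` stone_base j].
Proof.
move=> [a _ <-] [b _ <-] /= ha hb.
exists (Some (Order.meet a b)); split => //=.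
- by exists (Order.meet a b).
- by case: (ufP t) => _ _ _ + _; apply.
- move=> x /= hx; case: (ufP x) => _ _ up _ _; split.
  + by apply: (up _ _ hx); rewrite leIl.
  + by apply: (up _ _ hx); rewrite leIr.
Qed.

HB.instance Definition _ :=
  isBaseTopological.Build stone stone_base_cover stone_base_join.

(** A copy of St(A) made pointed by a given point [x0]; this is only needed
   because MathComp-Analysis measurable types must be pointed.  The point
   plays no mathematical role (same topology, same Borel sets). *)
Definition pstone (x0 : stone) : Type := stone.
HB.instance Definition _ (x0 : stone) := Choice.on (pstone x0).
HB.instance Definition _ (x0 : stone) := isPointed.Build (pstone x0) x0.
HB.instance Definition _ (x0 : stone) :=
  @isBaseTopological.Build (pstone x0) _ _ stone_base stone_base_cover
    stone_base_join.

Definition borel_stone : set (set stone) := <<s (@open stone) >>.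

Definition bstone (x0 : stone) := g_sigma_algebraType (@open (pstone x0)).

End BooleanAlgebra.

Section Radon.
Context {d : Order.disp_t} (A : ctbDistrLatticeType d) (x0 : stone A)
  (R : realType).

Local Notation T := (bstone x0).

Definition finite_radon (m : {measure set T -> \bar R}) : Prop :=
  (m setT < +oo)%E /\
  forall B : set T, measurable B -> forall e : R, 0 < e ->
    exists K : set (pstone x0),
      [/\ @compact (pstone x0) K, K `<=` B & (m B <= m K + e%:E)%E].

Definition sdiff_meas (m1 m2 : {measure set T -> \bar R}) : set T -> R :=
  fun B => fine (m1 B) - fine (m2 B).

(** Signed Radon measures: differences of two finite Radon measures
   (Jordan decomposition). *)
Definition signed_radon (nu : set T -> R) : Prop :=
  exists m1 m2 : {measure set T -> \bar R},
    [/\ finite_radon m1, finite_radon m2 & nu = sdiff_meas m1 m2].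

Definition total_variation (nu : set T -> R) : R :=
  sup [set r : R | exists (k : nat) (F : nat -> set T),
         [/\ (forall i, measurable (F i)),
             (forall i j, (i < k)%N -> (j < k)%N -> i <> j -> F i `&` F j = set0)
           & r = \sum_(i < k) `|nu (F i)|]].

(** Continuous linear functionals on the space M(St(A)) = C(St(A))^* of
   signed Radon measures with the total variation norm. *)
Definition bounded_linear_functional (Phi : (set T -> R) -> R) : Prop :=
  (forall (nu nu' : set T -> R) (a b : R), signed_radon nu -> signed_radon nu' ->
     Phi (fun B => a * nu B + b * nu' B) = a * Phi nu + b * Phi nu') /\
  exists C : R, forall nu, signed_radon nu -> `|Phi nu| <= C * total_variation nu.

Definition sintegral (m1 m2 : {measure set T -> \bar R}) (f : pstone x0 -> R) : R :=
  fine (\int[m1]_x (f x)%:E) - fine (\int[m2]_x (f x)%:E).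

Definition weakstar_cvg (m1 m2 : nat -> {measure set T -> \bar R})
  (l1 l2 : {measure set T -> \bar R}) : Prop :=
  forall f : pstone x0 -> R, continuous f ->
    (fun n => sintegral (m1 n) (m2 n) f) @ \oo --> sintegral l1 l2 f.

Definition weak_cvg (m1 m2 : nat -> {measure set T -> \bar R})
  (l1 l2 : {measure set T -> \bar R}) : Prop :=
  forall Phi, bounded_linear_functional Phi ->
    (fun n => Phi (sdiff_meas (m1 n) (m2 n))) @ \oo --> Phi (sdiff_meas l1 l2).

End Radon.

(** A signed Radon measure is
   given by a Jordan-type decomposition into two finite Radon measures; the
   quantification over the point x0 is vacuous if St(A) is empty (then the
   only measure is 0 and the property holds trivially). *)
Definition grothendieck (R : realType) {d : Order.disp_t}
  (A : ctbDistrLatticeType d) : Prop :=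
  forall (x0 : stone A)
    (m1 m2 : nat -> {measure set bstone x0 -> \bar R})
    (l1 l2 : {measure set bstone x0 -> \bar R}),
    (forall n, finite_radon (m1 n)) -> (forall n, finite_radon (m2 n)) ->
    finite_radon l1 -> finite_radon l2 ->
    weakstar_cvg m1 m2 l1 l2 -> weak_cvg m1 m2 l1 l2.

Definition bool_hom {dA dB : Order.disp_t} {A : ctbDistrLatticeType dA}
  {B : ctbDistrLatticeType dB} (phi : A -> B) : Prop :=
  [/\ forall a b, phi (Order.meet a b) = Order.meet (phi a) (phi b),
      forall a b, phi (Order.join a b) = Order.join (phi a) (phi b),
      forall a, phi (Order.compl a) = Order.compl (phi a),
      phi Order.top = Order.top &
      phi Order.bottom = Order.bottom].

Definition metric_BA {dB : Order.disp_t} {B : ctbDistrLatticeType dB}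
  {R : realType} (mu : B -> R) : Prop :=
  [/\ forall a b : B, Order.meet a b = Order.bottom ->
        mu (Order.join a b) = mu a + mu b,
      mu Order.top = 1 &
      forall a : B, a <> Order.bottom -> 0 < mu a].

Definition symdiff {d : Order.disp_t} {B : ctbDistrLatticeType d} (a b : B) : B :=
  Order.join (Order.diff a b) (Order.diff b a).

Definition d_mu {dB : Order.disp_t} {B : ctbDistrLatticeType dB}
  {R : realType} (mu : B -> R) (a b : B) : R := mu (symdiff a b).

Definition pointwise_metric_cvg {dA dB : Order.disp_t}
  {A : ctbDistrLatticeType dA} {B : ctbDistrLatticeType dB} {R : realType}
  (mu : B -> R) (phis : nat -> A -> B) (phi : A -> B) : Prop :=
  forall a : A, (fun n => d_mu mu (phis n a) (phi a)) @ \oo --> (0 : R).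

(** f_phi^{-1}[S] for f_phi : St(B) -> St(A), f_phi(x) = phi^{-1}[x]. *)
Definition fphi_preimage {dA dB : Order.disp_t}
  {A : ctbDistrLatticeType dA} {B : ctbDistrLatticeType dB}
  (phi : A -> B) (S : set (stone A)) : set (stone B) :=
  [set x | exists y : stone A, S y /\ uf y = [set a | uf x (phi a)]].

(* The dual maps f_n = f_{phi_n} and f = f_phi : St(B) -> St(A) are continuous.
   For a Borel D of St(B), the image measures nu_n = f_n(muhat|D) and
   nu = f(muhat|D) are Radon measures on St(A) of mass at most muhat(St(B)),
   and on a clopen [a] they differ by at most
   muhat([phi_n a] △ [phi a]) = d_mu(phi_n a, phi a) -> 0.
   Since St(A) is compact and zero-dimensional, clopen step functions are
   uniformly dense in C(St(A)), so nu_n -> nu weak*; the Grothendieck property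
   makes the convergence weak, and testing it against evaluation at a Borel S
   gives muhat(f_n^-1 S ∩ D) -> muhat(f^-1 S ∩ D).  With (S, D) equal to
   (S, ~ f^-1 S) and to (~ S, f^-1 S), both halves of f_n^-1 S △ f^-1 S get
   measure tending to 0. *)

From Pilot Require Import Defs.
From HB Require Import structures.
From mathcomp Require Import all_boot all_order all_algebra.
From mathcomp Require Import all_classical all_reals all_analysis.
From mathcomp Require Import measurable_realfun lra.
Import Order.TTheory Order.CTBDistrLatticeTheory GRing.Theory Num.Theory.
Import numFieldNormedType.Exports.
Local Open Scope classical_set_scope.
Local Open Scope ring_scope.

Section FiniteMeasure.
Context {d} {T : measurableType d} {R : realType} {m : {measure set T -> \bar R}}.
Hypothesis m_fin : (m setT < +oo)%E.

Lemma fin_num_measure X : measurable X -> m X \is a fin_num.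
Proof.
move=> mX; rewrite ge0_fin_numE ?measure_ge0 //.
by apply: le_lt_trans m_fin; apply: le_measure; rewrite ?inE.
Qed.

Lemma fine_measure_le X Y : measurable X -> measurable Y -> X `<=` Y ->
  fine (m X) <= fine (m Y).
Proof.
move=> mX mY XY; rewrite -lee_fin !fineK ?fin_num_measure //.
by apply: le_measure; rewrite ?inE.
Qed.

Lemma fine_measureU_le X Y : measurable X -> measurable Y ->
  fine (m (X `|` Y)) <= fine (m X) + fine (m Y).
Proof.
move=> mX mY; rewrite -lee_fin EFinD !fineK ?fin_num_measure //.
  exact: measureU2.
exact: measurableU.
Qed.

Lemma fine_measureI_dist X Y D : measurable X -> measurable Y -> measurable D ->
  `|fine (m (X `&` D)) - fine (m (Y `&` D))| <= fine (m ((X `\` Y) `|` (Y `\` X))).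
Proof.
move=> mX mY mD; set E := (X `\` Y) `|` (Y `\` X).
have mE : measurable E by apply: measurableU; exact: measurableD.
have le_ID (Z W : set T) : measurable Z -> measurable W -> Z `\` W `<=` E ->
    fine (m (Z `&` D)) <= fine (m (W `&` D)) + fine (m E).
  move=> mZ mW ZWE.
  apply: (le_trans _ (fine_measureU_le _ _ (measurableI _ _ mW mD) mE)).
  apply: fine_measure_le; first exact: measurableI.
    by apply: measurableU => //; exact: measurableI.
  by move=> z [Zz Dz]; have [Wz|nWz] := pselect (W z); [left | right; apply: ZWE].
have := le_ID _ _ mX mY (@subsetUl _ _ _).
have := le_ID _ _ mY mX (@subsetUr _ _ _).
by rewrite ler_distl; lra.
Qed.

Lemma sum_fine_measure_le k (F : nat -> set T) : (forall i, measurable (F i)) ->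
  (forall i j, (i < k)%N -> (j < k)%N -> i <> j -> F i `&` F j = set0) ->
  \sum_(i < k) fine (m (F i)) <= fine (m setT).
Proof.
move=> mF tF; rewrite -lee_fin -sumEFin.
under eq_bigr do rewrite fineK ?fin_num_measure //.
rewrite fineK ?fin_num_measure // -measure_semi_additive_ord_I //.
- by apply: le_measure; rewrite ?inE //; exact: bigsetU_measurable.
- move=> i j ik jk Fij; apply: contrapT => nij.
  by move: Fij; rewrite tF //; case.
- exact: bigsetU_measurable.
Qed.

Lemma bounded_integrable {f : T -> R} {M : R} :
  measurable_fun setT f -> (forall x, `|f x| <= M) -> m.-integrable setT (EFin \o f).
Proof.
move=> mf fM; apply: measurable_bounded_integrable => //.
exists M; split; first exact: num_real.
by move=> r Mr x _; apply: le_trans (fM x) _; exact: ltW.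
Qed.

Lemma normr_Rintegral_le {f : T -> R} {M : R} :
  measurable_fun setT f -> (forall x, `|f x| <= M) ->
  `|Rintegral m setT f| <= M * fine (m setT).
Proof.
move=> mf fM; have intf := bounded_integrable mf fM.
apply: le_trans (le_normr_Rintegral _ intf) _ => //.
rewrite -Rintegral_cst //; apply: le_Rintegral => //.
- apply: (@bounded_integrable _ M); first exact: measurableT_comp.
  by move=> x; rewrite normr_id.
- exact: (@bounded_integrable _ `|M|).
Qed.

End FiniteMeasure.

Lemma cvg_uniform_approx {R : realFieldType} (u : nat -> R) (l : R) :
  (forall e, 0 < e -> exists (v : nat -> R) (k : R),
     [/\ v @ \oo --> k, forall n, `|u n - v n| <= e & `|l - k| <= e]) ->
  u @ \oo --> l.
Proof.
move=> approx; apply/cvgrPdist_le => e e0.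
have e30 : 0 < e / 3 by rewrite divr_gt0.
have [v [k [/cvgrPdist_le /(_ _ e30) vk uv lk]]] := approx _ e30.
apply: filterS vk => n kv; have := uv n; rewrite distrC => vu.
apply: le_trans (ler_distD k _ _) _; apply: le_trans (lerD (lexx _) (ler_distD (v n) _ _)) _.
lra.
Qed.

Section StoneSpace.
Context {d : Order.disp_t} {A : ctbDistrLatticeType d}.
Implicit Types (x y : stone A) (a b : A).

Lemma uf_top x : uf x Order.top.
Proof. by case: (ufP x). Qed.

Lemma uf_bot x : ~ uf x Order.bottom.
Proof. by case: (ufP x). Qed.

Lemma uf_up x a b : uf x a -> (a <= b)%O -> uf x b.
Proof. by case: (ufP x) => _ _ + _ _; apply. Qed.

Lemma uf_meet x a b : uf x (Order.meet a b) <-> uf x a /\ uf x b.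
Proof.
split=> [xab|[xa xb]]; last by case: (ufP x) => _ _ _ + _; apply.
by split; apply: uf_up xab _; rewrite ?leIl ?leIr.
Qed.

Lemma uf_compl x a : uf x (Order.compl a) <-> ~ uf x a.
Proof.
split=> [xa' xa|nxa]; last by case: (ufP x) => _ _ _ _ /(_ a) [].
by apply: (uf_bot x); rewrite -(meetxC a); apply/uf_meet.
Qed.

Lemma uf_join x a b : uf x (Order.join a b) <-> uf x a \/ uf x b.
Proof.
split=> [xab|[xa|xb]]; last 2 first.
- by apply: uf_up xa _; rewrite leUl.
- by apply: uf_up xb _; rewrite leUr.
apply: contrapT => /not_orP[nxa nxb].
have /uf_compl : uf x (Order.compl (Order.join a b)).
  by rewrite complU; apply/uf_meet; split; apply/uf_compl.
exact.
Qed.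

Lemma uf_inj : injective (@uf _ A).
Proof.
by case=> u pu [v pv] /= euv; subst v; congr Stone; exact: Prop_irrelevance.
Qed.

Lemma sclopenI a b : sclopen (Order.meet a b) = sclopen a `&` sclopen b.
Proof. by apply/seteqP; split=> x /uf_meet. Qed.

Lemma sclopenU a b : sclopen (Order.join a b) = sclopen a `|` sclopen b.
Proof. by apply/seteqP; split=> x /uf_join. Qed.

Lemma sclopenC a : sclopen (Order.compl a) = ~` sclopen a.
Proof. by apply/seteqP; split=> x /uf_compl. Qed.

Lemma sclopenT : sclopen (Order.top : A) = setT.
Proof. by apply/seteqP; split=> x // _; exact: uf_top. Qed.

Lemma sclopen0 : sclopen (Order.bottom : A) = set0.
Proof. by apply/seteqP; split=> x //; exact: uf_bot. Qed.

Lemma sclopen_symdiff a b :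
  sclopen (symdiff a b) = (sclopen a `\` sclopen b) `|` (sclopen b `\` sclopen a).
Proof. by rewrite /symdiff sclopenU !diffE !sclopenI !sclopenC. Qed.

Lemma open_sclopen a : open (sclopen a).
Proof. by exists [set Some a]; [move=> _ ->; exists a | rewrite bigcup_set1]. Qed.

Lemma open_sclopen_nbhs {U : set (stone A)} {x} :
  open U -> U x -> exists2 a, uf x a & sclopen a `<=` U.
Proof.
move=> [I sI <-] [[a|//] Ia xa].
by exists a => // y ya; exists (Some a).
Qed.

Lemma stone_hausdorff : hausdorff_space (stone A).
Proof.
rewrite open_hausdorff => x y /eqP nxy.
have [a xa nya] : exists2 a, uf x a & ~ uf y a.
  apply: contrapT => nsep; apply/nxy/uf_inj/seteqP; split=> a ha.
    by apply: contrapT => nya; apply: nsep; exists a.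
  apply: contrapT => nxa; apply: nsep; exists (Order.compl a).
    exact/uf_compl.
  by move/uf_compl.
exists (sclopen a, sclopen (Order.compl a)) => /=.
  by rewrite !inE; split=> //; apply/uf_compl.
by split; [exact: open_sclopen | exact: open_sclopen | rewrite sclopenC setICr].
Qed.

Lemma stone_compact : compact [set: stone A].
Proof.
rewrite compact_ultra => F FU _.
have uFP : ultrafilter [set a : A | F (sclopen a)].
  split=> /=.
  - by rewrite sclopenT; exact: filterT.
  - by rewrite sclopen0; exact: filter_not_empty.
  - by move=> a b Fa ab; apply: filterS Fa => x xa; exact: uf_up xa ab.
  - by move=> a b Fa Fb; rewrite sclopenI; exact: filterI.
  - by move=> a; rewrite sclopenC; exact: in_ultra_setVsetC.
exists (Stone uFP); split=> // U; rewrite nbhsE => -[V [oV Vx] VU].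
have [a xa aV] := open_sclopen_nbhs oV Vx.
by apply: filterS VU _; apply: filterS aV _.
Qed.

End StoneSpace.

Section DualMap.
Context {dA dB : Order.disp_t} {A : ctbDistrLatticeType dA}
  {B : ctbDistrLatticeType dB} {phi : A -> B} (hphi : bool_hom phi).

Lemma fphi_ultrafilter (x : stone B) : ultrafilter [set a : A | uf x (phi a)].
Proof.
case: hphi => phiI _ phiC phiT phi0; split=> /=.
- by rewrite phiT; exact: uf_top.
- by rewrite phi0; exact: uf_bot.
- by move=> a b + /meet_idPl ab; rewrite -ab phiI => /uf_meet[].
- by move=> a b xa xb; rewrite phiI; exact/uf_meet.
- by move=> a; rewrite phiC; case: (ufP x) => _ _ _ _; apply.
Qed.

Definition fphi (x : stone B) : stone A := Stone (fphi_ultrafilter x).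

Lemma fphi_preimageE (S : set (stone A)) : fphi_preimage phi S = fphi @^-1` S.
Proof.
apply/seteqP; split=> x /=; last by exists (fphi x).
by move=> [y [Sy /esym fxy]]; rewrite (_ : fphi x = y) //; exact: uf_inj.
Qed.

Lemma fphi_open (U : set (stone A)) : open U -> open (fphi @^-1` U).
Proof.
move=> [I sI <-]; rewrite preimage_bigcup; apply: bigcup_open => i Ii.
by have [a _ <-] := sI _ Ii; exact: open_sclopen.
Qed.

Lemma fphi_continuous : continuous fphi.
Proof. by apply/continuousP => U; exact: fphi_open. Qed.

Lemma fphi_measurable (x0 : stone B) (xA : stone A) :
  measurable_fun (T := bstone x0) (U := bstone xA) setT fphi.
Proof.
apply: (@measurability _ _ (bstone x0) (bstone xA) _ _ (@open (pstone xA))) => //.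
move=> _ [U oU <-].
by apply: sub_sigma_algebra; rewrite setTI; exact: fphi_open.
Qed.

End DualMap.

Lemma compact_measurable {d} {A : ctbDistrLatticeType d} (x : stone A)
  (K : set (pstone x)) : compact K -> measurable (K : set (bstone x)).
Proof.
move=> cK; rewrite -[K]setCK; apply: measurableC; apply: sub_sigma_algebra.
by apply: closed_openC; exact: (compact_closed (@stone_hausdorff _ A)).
Qed.

Section FphiMeasure.
Context {dA dB : Order.disp_t} {A : ctbDistrLatticeType dA}
  {B : ctbDistrLatticeType dB} {R : realType} (x0 : stone B) (xA : stone A).
Variable muhat : {measure set bstone x0 -> \bar R}.
Context {phi : A -> B} (hphi : bool_hom phi).

Lemma measurable_fphi_preimage (S : set (bstone xA)) : measurable S ->
  measurable (fphi hphi @^-1` S : set (bstone x0)).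
Proof.
move=> mS; rewrite -[X in measurable X]setTI.
exact: fphi_measurable hphi x0 xA measurableT _ mS.
Qed.

(* The measure instance of [pushforward] takes the measurability proof as a
   parameter that unification cannot infer, hence the definition by tactic. *)
Definition fphi_measure {D : set (bstone x0)} (mD : measurable D) :
  {measure set bstone xA -> \bar R}.
Proof.
refine (pushforward (mrestr muhat mD) (fphi hphi : bstone x0 -> bstone xA)).
exact: fphi_measurable.
Defined.

Lemma fphi_measureE D (mD : measurable D) S :
  fphi_measure mD S = muhat (fphi hphi @^-1` S `&` D).
Proof. by []. Qed.

Lemma fphi_measure_radon {D} (mD : measurable D) :
  finite_radon muhat -> finite_radon (fphi_measure mD).
Proof.
move=> [muhat_fin muhat_inner]; split.
  rewrite fphi_measureE; apply: le_lt_trans muhat_fin; apply: le_measure; rewrite ?inE //.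
  by apply: measurableI => //; exact: measurable_fphi_preimage.
move=> S mS e e0.
have mSD : measurable (fphi hphi @^-1` S `&` D : set (bstone x0)).
  by apply: measurableI => //; exact: measurable_fphi_preimage.
have [K [cK KSD SDK]] := muhat_inner _ mSD e e0.
have cfK : compact (fphi hphi @` K : set (pstone xA)).
  apply: continuous_compact => //; apply: continuous_subspaceT => x.
  exact: fphi_continuous.
exists (fphi hphi @` K); split => //; first by move=> _ [y /KSD[Sy _] <-].
rewrite fphi_measureE; apply: le_trans SDK _; rewrite leeD2r //.
apply: le_measure; rewrite ?inE; first exact: compact_measurable.
  by apply: measurableI => //; apply: measurable_fphi_preimage; exact: compact_measurable.
by move=> y Ky; split; [exists y | case: (KSD _ Ky)].
Qed.

End FphiMeasure.

Section EvaluationFunctional.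
Context {d : Order.disp_t} {A : ctbDistrLatticeType d} (xA : stone A) (R : realType).
Local Notation T := (bstone xA).

Lemma normr_le_total_variation (nu : set T -> R) (S : set T) :
  measurable S -> signed_radon nu -> `|nu S| <= Defs.total_variation nu.
Proof.
move=> mS [m1 [m2 [[m1_fin _] [m2_fin _] ->]]]; apply: ub_le_sup; last first.
  exists 1%N, (fun=> S); split=> //; last by rewrite big_ord1.
  by move=> i j; rewrite !ltnS !leqn0 => /eqP-> /eqP->.
exists (fine (m1 setT) + fine (m2 setT)) => _ [k [F [mF tF ->]]].
apply: (le_trans (y := \sum_(i < k) (fine (m1 (F i)) + fine (m2 (F i))))).
  apply: ler_sum => i _; apply: le_trans (ler_normB _ _) _.
  by rewrite !ger0_norm // fine_ge0 // measure_ge0.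
by rewrite big_split; apply: lerD; exact: sum_fine_measure_le.
Qed.

Lemma eval_bounded_linear_functional (S : set T) : measurable S ->
  bounded_linear_functional (fun nu : set T -> R => nu S).
Proof.
by move=> mS; split=> //; exists 1 => nu nu_radon; rewrite mul1r normr_le_total_variation.
Qed.

End EvaluationFunctional.

Section StepFunction.
Context {d : Order.disp_t} {A : ctbDistrLatticeType d} {R : realType}.

Fixpoint stepf (s : seq (A * R)) (x : stone A) : R :=
  if s is (a, c) :: s' then if `[< uf x a >] then c else stepf s' x else 0.

Lemma stepf_bound s x : `|stepf s x| <= \sum_(p <- s) `|p.2|.
Proof.
elim: s => [|[a c] s IHs] /=; first by rewrite big_nil normr0.
rewrite big_cons /=; case: asboolP => _; first by rewrite lerDl sumr_ge0.
by apply: le_trans IHs _; rewrite lerDr.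
Qed.

Lemma dist_stepf_le (g : stone A -> R) e s x :
  (forall a c, (a, c) \in s -> forall y, uf y a -> `|g y - c| <= e) ->
  (exists2 p, p \in s & uf x p.1) -> `|g x - stepf s x| <= e.
Proof.
elim: s => [|[a c] s IHs] /= gs [[b c'] //].
rewrite in_cons => /orP[/eqP[-> ->] xa|bs xb].
  by rewrite asboolT //; apply: gs xa; exact: mem_head.
case: asboolP => [xa|_]; first by apply: gs xa; exact: mem_head.
apply: IHs; last by exists (b, c').
by move=> a' c'' a's; apply: gs; rewrite in_cons a's orbT.
Qed.

End StepFunction.

Section StepIntegral.
Context {d : Order.disp_t} {A : ctbDistrLatticeType d} (xA : stone A) {R : realType}.
Local Notation T := (bstone xA).

Lemma measurable_sclopen (a : A) : measurable (sclopen a : set T).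
Proof. by apply: sub_sigma_algebra; exact: open_sclopen. Qed.

Lemma measurable_stepf (s : seq (A * R)) : measurable_fun (setT : set T) (stepf s).
Proof.
elim: s => [|[a c] s IHs]; first exact: measurable_cst.
apply: measurable_fun_ifT; [|exact: measurable_cst|exact: IHs].
apply: (@measurable_fun_bool _ _ _ _ true); rewrite setTI.
rewrite (_ : _ @^-1` _ = sclopen a); first exact: measurable_sclopen.
by apply/predeqP => x; split=> /asboolP.
Qed.

Lemma Rintegral_stepf_cons (m : {measure set T -> \bar R}) D a c s :
  (m setT < +oo)%E -> measurable D ->
  Rintegral m D (stepf ((a, c) :: s)) =
  c * fine (m (D `&` sclopen a)) + Rintegral m (D `\` sclopen a) (stepf s).
Proof.
move=> m_fin mD; have ma := measurable_sclopen a.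
have int_stepf : m.-integrable D (EFin \o stepf ((a, c) :: s)).
  apply: integrableS measurableT mD (subsetT _) _.
  exact: bounded_integrable (measurable_stepf _) (stepf_bound _).
have mDa : measurable (D `&` sclopen a) by exact: measurableI.
have mDna : measurable (D `\` sclopen a) by exact: measurableD.
rewrite -{1}(setUIDK D (sclopen a)) Rintegral_setU ?setUIDK //; last first.
  by apply/disj_setPS => x [[_ xa] []].
rewrite -[X in _ = X + _](Rintegral_cst _ mDa).
congr (_ + _); apply: eq_Rintegral => x /set_mem /= [_ xa].
  by rewrite asboolT.
by rewrite asboolF.
Qed.

Lemma continuous_measurable {g : pstone xA -> R} :
  continuous g -> measurable_fun (setT : set T) g.
Proof.
move=> /continuousP gC; apply: (measurability _ (RGenOpens.measurableE R)).
move=> _ [_ [a [b ->] <-]]; apply: sub_sigma_algebra; rewrite setTI.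
by apply: gC; exact: interval_open.
Qed.

Lemma continuous_stepf_approx {g : pstone xA -> R} {e : R} : continuous g -> 0 < e ->
  exists s : seq (A * R), forall x, `|g x - stepf s x| <= e.
Proof.
move=> gC e0.
have g_osc (y : stone A) :
    exists a, uf y a /\ forall z, uf z a -> `|g z - g y| <= e.
  have : nbhs y (g @^-1` ball (g y) e) by apply: gC; exact: nbhsx_ballx.
  rewrite nbhsE => -[V [oV Vy] Vg]; have [a ya aV] := open_sclopen_nbhs oV Vy.
  by exists a; split=> // z /aV /Vg; rewrite /ball /= distrC => /ltW.
have [a_ a_P] := choice g_osc.
have stone_cover : cover_compact [set: pstone xA].
  by rewrite -compact_cover; exact: stone_compact.
have [|y _|F _ cover] := stone_cover _ setT (fun y => sclopen (a_ y)).
- by move=> y _; exact: open_sclopen.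
- by exists y => //; exact: (a_P y).1.
exists [seq (a_ y, g y) | y <- finmap.enum_fset F] => x; apply: dist_stepf_le.
  by move=> _ _ /mapP[y _ [-> ->]] z /(a_P y).2.
have [y Fy xy] := cover x I.
by exists (a_ y, g y) => //; apply/mapP; exists y.
Qed.

End StepIntegral.

Section WeakStarFromClopens.
Context {d : Order.disp_t} {A : ctbDistrLatticeType d} {xA : stone A} {R : realType}.
Local Notation T := (bstone xA).
Context {nus : nat -> {measure set T -> \bar R}} {nu : {measure set T -> \bar R}} {M : R}.
Hypotheses (nus_le : forall n, (nus n setT <= M%:E)%E) (nu_le : (nu setT <= M%:E)%E).
Hypothesis nus_sclopen : forall a : A,
  (fun n => fine (nus n (sclopen a))) @ \oo --> fine (nu (sclopen a)).

Let nus_fin n : (nus n setT < +oo)%E.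
Proof. exact: le_lt_trans (nus_le n) (ltry _). Qed.

Let nu_fin : (nu setT < +oo)%E.
Proof. exact: le_lt_trans nu_le (ltry _). Qed.

Lemma cvg_Rintegral_stepf s e :
  (fun n => Rintegral (nus n) (sclopen e) (stepf s)) @ \oo -->
  Rintegral nu (sclopen e) (stepf s).
Proof.
elim: s e => [|[a c] s IHs] e.
  have stepf_nil (m : {measure set T -> \bar R}) :
      Rintegral m (sclopen e) (stepf [::]) = 0.
    by rewrite Rintegral_cst ?mul0r //; exact: measurable_sclopen.
  by rewrite stepf_nil; under eq_fun do rewrite stepf_nil; exact: cvg_cst.
have stepf_cons (m : {measure set T -> \bar R}) : (m setT < +oo)%E ->
    Rintegral m (sclopen e) (stepf ((a, c) :: s)) =
    c * fine (m (sclopen (Order.meet e a))) +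
    Rintegral m (sclopen (Order.meet e (Order.compl a))) (stepf s).
  move=> m_fin; rewrite Rintegral_stepf_cons //; last exact: measurable_sclopen.
  by rewrite -sclopenI setDE -sclopenC -sclopenI.
rewrite (stepf_cons _ nu_fin); under eq_fun => n do rewrite (stepf_cons _ (nus_fin n)).
apply: cvgD; last exact: IHs.
by apply: cvgMr; exact: nus_sclopen.
Qed.

Lemma cvg_Rintegral_continuous (g : pstone xA -> R) : continuous g ->
  (fun n => Rintegral (nus n) setT g) @ \oo --> Rintegral nu setT g.
Proof.
move=> gC; apply: cvg_uniform_approx => e e0.
have M0 : 0 <= M by rewrite -lee_fin; apply: le_trans nu_le; exact: measure_ge0.
have M1_gt0 : 0 < M + 1 by rewrite ltr_wpDl.
have e'0 : 0 < e / (M + 1) by rewrite divr_gt0.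
have [s gs] := continuous_stepf_approx xA gC e'0.
have near_stepf (m : {measure set T -> \bar R}) : (m setT <= M%:E)%E ->
    `|Rintegral m setT g - Rintegral m setT (stepf s)| <= e.
  move=> m_le; have m_fin := le_lt_trans m_le (ltry M).
  have mg := continuous_measurable xA gC; have ms := measurable_stepf xA s.
  have gM x : `|g x| <= e / (M + 1) + \sum_(p <- s) `|p.2|.
    rewrite -[g x](subrK (stepf s x)); apply: le_trans (ler_normD _ _) _.
    by apply: lerD; [exact: gs | exact: stepf_bound].
  rewrite -RintegralB //; last 2 first.
  - exact: bounded_integrable mg gM.
  - exact: bounded_integrable ms (stepf_bound _).
  apply: le_trans (normr_Rintegral_le m_fin (measurable_funB mg ms) gs) _.
  rewrite -[leRHS](@divfK _ (M + 1)) ?gt_eqF // ler_wpM2l ?(ltW e'0) //.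
  by rewrite -lee_fin fineK ?fin_num_measure // (le_trans m_le) // lee_fin lerDl.
exists (fun n => Rintegral (nus n) setT (stepf s)), (Rintegral nu setT (stepf s)).
split=> [|n|]; last exact: near_stepf.
- by have := cvg_Rintegral_stepf s Order.top; rewrite sclopenT.
- exact: near_stepf.
Qed.

End WeakStarFromClopens.

Lemma mzero_radon {d} {A : ctbDistrLatticeType d} (xA : stone A) (R : realType) :
  finite_radon (@mzero _ (bstone xA) R).
Proof.
split=> [|S _ e e0]; first exact: ltry.
by exists set0; split=> //; [exact: compact0 | rewrite /mzero add0e lee_fin ltW].
Qed.

Lemma sintegral_mzero {d} {A : ctbDistrLatticeType d} (xA : stone A) (R : realType)
  (m : {measure set bstone xA -> \bar R}) (f : pstone xA -> R) :
  Defs.sintegral m mzero f = Rintegral m setT f.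
Proof. by rewrite /Defs.sintegral integral_measure_zero /= subr0. Qed.

Section BorelConvergence.
Context {dA dB : Order.disp_t} {A : ctbDistrLatticeType dA}
  {B : ctbDistrLatticeType dB} {R : realType}.
Context {mu : B -> R} {phis : nat -> A -> B} {phi : A -> B}.
Hypotheses (hphis : forall n, bool_hom (phis n)) (hphi : bool_hom phi).
Hypothesis phis_cvg : pointwise_metric_cvg mu phis phi.
Context {x0 : stone B} {muhat : {measure set bstone x0 -> \bar R}}.
Hypothesis muhat_radon : finite_radon muhat.
Hypothesis muhat_sclopen : forall b : B, muhat (sclopen b) = (mu b)%:E.

Let xA := fphi hphi x0.
Let muhat_fin : (muhat setT < +oo)%E := muhat_radon.1.

Lemma cvg_muhat_sclopen (D : set (bstone x0)) (a : A) : measurable D ->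
  (fun n => fine (muhat (sclopen (phis n a) `&` D))) @ \oo -->
  fine (muhat (sclopen (phi a) `&` D)).
Proof.
move=> mD; apply/cvgrPdist_le => e e0; move/cvgrPdist_le : (phis_cvg a) => /(_ e e0).
apply: filterS => n; rewrite sub0r normrN distrC => /(le_trans (ler_norm _)).
apply: le_trans.
rewrite /d_mu -[mu _]/(fine (mu _)%:E) -muhat_sclopen sclopen_symdiff.
by apply: fine_measureI_dist => //; exact: measurable_sclopen.
Qed.

Lemma cvg_muhat_fphi_preimage (S : set (stone A)) (D : set (bstone x0)) :
  grothendieck R A -> borel_stone S -> measurable D ->
  (fun n => fine (muhat (fphi (hphis n) @^-1` S `&` D))) @ \oo -->
  fine (muhat (fphi hphi @^-1` S `&` D)).
Proof.
move=> G bS mD.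
pose nus n := fphi_measure x0 xA muhat (hphis n) mD.
pose nu := fphi_measure x0 xA muhat hphi mD.
have mass_le psi (hpsi : bool_hom psi) :
    (fphi_measure x0 xA muhat hpsi mD setT <= (fine (muhat setT))%:E)%E.
  rewrite fineK ?fin_num_measure // fphi_measureE; apply: le_measure; rewrite ?inE //.
  by apply: measurableI => //; exact: measurable_fphi_preimage.
have nus_weakstar : weakstar_cvg nus (fun=> mzero) nu mzero.
  move=> g gC; rewrite sintegral_mzero; under eq_fun do rewrite sintegral_mzero.
  have nus_sclopen a : (fun n => fine (nus n (sclopen a))) @ \oo --> fine (nu (sclopen a)).
    exact: cvg_muhat_sclopen.
  exact: cvg_Rintegral_continuous (fun n => mass_le _ (hphis n)) (mass_le _ hphi)
    nus_sclopen _ gC.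
have := G xA nus (fun=> mzero) nu mzero
  (fun n => fphi_measure_radon _ _ _ (hphis n) mD muhat_radon) (fun=> mzero_radon _ _)
  (fphi_measure_radon _ _ _ hphi mD muhat_radon) (mzero_radon _ _) nus_weakstar _
  (eval_bounded_linear_functional xA R S bS).
by rewrite /sdiff_meas /= subr0; under eq_fun do rewrite subr0.
Qed.

Lemma cvg_muhat_fphi_symdiff (S : set (stone A)) :
  grothendieck R A -> borel_stone S ->
  (fun n => muhat ((fphi (hphis n) @^-1` S `\` fphi hphi @^-1` S)
                   `|` (fphi hphi @^-1` S `\` fphi (hphis n) @^-1` S))) @ \oo --> 0%E.
Proof.
move=> G bS; have mS : measurable (S : set (bstone xA)) := bS.
have mpre psi (hpsi : bool_hom psi) (S' : set (bstone xA)) :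
    measurable S' -> measurable (fphi hpsi @^-1` S' : set (bstone x0)).
  exact: measurable_fphi_preimage.
set P := fphi hphi @^-1` S.
apply/fine_cvgP; split.
  by apply: nearW => n; apply: fin_num_measure => //; apply: measurableU;
    apply: measurableD; exact: mpre.
apply: (@squeeze_cvgr _ _ _ _ (cst 0) (fun n =>
  fine (muhat (fphi (hphis n) @^-1` S `&` ~` P)) +
  fine (muhat ((fphi (hphis n) @^-1` ~` S) `&` P)))).
- apply: nearW => n /=; rewrite fine_ge0 ?measure_ge0 //=.
  rewrite preimage_setC [X in _ + fine (muhat X)]setIC -!setDE.
  by apply: fine_measureU_le => //; apply: measurableD; exact: mpre.
- exact: cvg_cst.
rewrite -[0]addr0; apply: cvgD.
- have := cvg_muhat_fphi_preimage S (~` P) G bS (measurableC (mpre _ hphi _ mS)).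
  by rewrite setICr measure0.
- have := cvg_muhat_fphi_preimage (~` S) P G (measurableC mS) (mpre _ hphi _ mS).
  by rewrite preimage_setC setICl measure0.
Qed.

End BorelConvergence.

Theorem corollary5p5 {dA dB : Order.disp_t}
  (A : ctbDistrLatticeType dA) (B : ctbDistrLatticeType dB)
  (R : realType) (mu : B -> R)
  (phis : nat -> A -> B) (phi : A -> B) :
  grothendieck R A ->
  metric_BA mu ->
  (forall n, bool_hom (phis n)) -> bool_hom phi ->
  pointwise_metric_cvg mu phis phi ->
  (* for the Radon extension mu_hat of mu to St(B) *)
  forall (x0 : stone B) (muhat : {measure set bstone x0 -> \bar R}),
    finite_radon muhat ->
    (forall b : B, muhat (sclopen b) = (mu b)%:E) ->
  forall S : set (stone A), borel_stone S ->
    (fun n => muhat ((fphi_preimage (phis n) S `\` fphi_preimage phi S)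
                     `|` (fphi_preimage phi S `\` fphi_preimage (phis n) S)))
      @ \oo --> 0%E.
Proof.
move=> G _ hphis hphi phis_cvg x0 muhat muhat_radon muhat_sclopen S bS.
rewrite fphi_preimageE; under eq_fun do rewrite fphi_preimageE.
exact: cvg_muhat_fphi_symdiff.
Qed.
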